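(* Fix $i\in\{1,\dots,k\}$ and let $\psi_i$ and $\mathcal{M}^\psi_i$ be defined as in the context. Then $|\mathcal{M}^\psi_i|\le 2\epsilon\cdot 2^{kn}$.
   Context: Setting. $\mathcal{N}$ is a directed network containing nodes $s_1,\dots,s_k,t_1,\dots,t_k$. The network $\mathcal{G}$ is obtained from $\mathcal{N}$ by adding new nodes $s,t,A_1,\dots,A_k,B_1,\dots,B_k$ and, for each $i$, the unit-capacity edges $a_i=(s,A_i)$, two parallel edges $x_i,y_i$ from $A_i$ to $B_i$, $z_i=(A_i,s_i)$, $z'_i=(t_i,B_i)$, and $b_i=(B_i,t)$; the incoming edges of $t$ are exactly $b_1,\dots,b_k$. Admissible error patterns $\boldsymbol r=(r_e)$ are those in which at most one edge $e$ has $r_e\neq0$, with $e\notin\{a_1,\dots,a_k,b_1,\dots,b_k\}$. The output of an edge is its input XOR $r_e$. Let $\mathcal{C}$ be a length-$n$ network code on $\mathcal{G}$. The source $s$ has message $m\in\mathcal{M}=[2^{kn}]$, where $[N]=\{1,\dots,N\}$. An edge $e=(u,v)$ of capacity $c_e$ carries a value in $[2^{nc_e}]$ computed from the signals on the incoming edges of $u$ (and from $m$ if $u=s$). The terminal $t$ decodes the tuple received on $b_1,\dots,b_k$ to an estimate of $m$. For an edge $e$, let $e(m,\boldsymbol r)$ denote the signal received on $e$ when message $m$ is sent and error pattern $\boldsymbol r$ occurs, and let $e(m)=e(m,\boldsymbol 0)$. Write $\boldsymbol b(m)=(b_1(m),\dots,b_k(m))$. Let $\mathcal{M}^{\text{good}}$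 be the set of messages $m$ such that $t$ decodes to $m$ under every admissible error pattern when $m$ is sent. Assume $\epsilon\ge0$ and $|\mathcal{M}^{\text{good}}|\ge(1-\epsilon)2^{kn}$. Define $\psi_i:[2^n]\to[2^n]$ by letting $\psi_i(\hat z)$ be a value $\hat b$ maximizing $|\{m\in\mathcal{M}^{\text{good}}: z'_i(m)=\hat z,\ b_i(m)=\hat b\}|$, with ties broken arbitrarily. Let $\mathcal{M}^\psi_i=\{m\in\mathcal{M}^{\text{good}}:\psi_i(z'_i(m))\ne b_i(m)\}$. *)

From mathcomp Require Import all_boot all_order all_algebra.
Set Implicit Arguments. Unset Strict Implicit. Unset Printing Implicit Defensive.

Definition GV (VN : Type) (k : nat) : Type := (VN + (bool + ('I_k + 'I_k)))%type.

Definition node_s {VN k} : GV VN k := inr (inl true).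
Definition node_t {VN k} : GV VN k := inr (inl false).
Definition node_A {VN k} (i : 'I_k) : GV VN k := inr (inr (inl i)).
Definition node_B {VN k} (i : 'I_k) : GV VN k := inr (inr (inr i)).

(* Kinds of new edges, one of each per index i:
   a_i = (s,A_i), x_i,y_i : A_i -> B_i, z_i = (A_i,s_i), z'_i = (t_i,B_i), b_i = (B_i,t). *)
Inductive ekind := Ka | Kx | Ky | Kz | Kz' | Kb.

Definition GE (EN : Type) (k : nat) : Type := (EN + (ekind * 'I_k))%type.

Definition edge_a {EN k} (i : 'I_k) : GE EN k := inr (Ka, i).
Definition edge_x {EN k} (i : 'I_k) : GE EN k := inr (Kx, i).
Definition edge_y {EN k} (i : 'I_k) : GE EN k := inr (Ky, i).
Definition edge_z {EN k} (i : 'I_k) : GE EN k := inr (Kz, i).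
Definition edge_z' {EN k} (i : 'I_k) : GE EN k := inr (Kz', i).
Definition edge_b {EN k} (i : 'I_k) : GE EN k := inr (Kb, i).

Section Network.
Variables (VN EN : Type) (k : nat).
Variables (tailN headN : EN -> VN) (sN tN : 'I_k -> VN) (cN : EN -> nat).

Definition gtail (e : GE EN k) : GV VN k :=
  match e with
  | inl e0 => inl (tailN e0)
  | inr (Ka, i) => node_s
  | inr (Kx, i) => node_A i
  | inr (Ky, i) => node_A i
  | inr (Kz, i) => node_A i
  | inr (Kz', i) => inl (tN i)
  | inr (Kb, i) => node_B i
  end.

Definition ghead (e : GE EN k) : GV VN k :=
  match e with
  | inl e0 => inl (headN e0)
  | inr (Ka, i) => node_A i
  | inr (Kx, i) => node_B i
  | inr (Ky, i) => node_B i
  | inr (Kz, i) => inl (sN i)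
  | inr (Kz', i) => node_B i
  | inr (Kb, i) => node_t
  end.

Definition gcap (e : GE EN k) : nat :=
  match e with inl e0 => cN e0 | inr _ => 1 end.

Variable n : nat. (* code length *)

(* The signal alphabet of edge e is [2^(n c_e)], represented as the
   bit strings of length n * c_e (so that XOR is bitwise XOR). *)
Definition value (e : GE EN k) : Type := {ffun 'I_(n * gcap e) -> bool}.

Definition vzero (e : GE EN k) : value e := [ffun => false].
Definition vxor (e : GE EN k) (u v : value e) : value e := [ffun j => u j (+) v j].

Definition Msg : finType := 'I_(2 ^ (k * n)).

Definition errpat : Type := forall e : GE EN k, value e.
Definition noerr : errpat := fun e => vzero e.

Definition admissible (r : errpat) : Prop :=
  (forall e, r e <> vzero e -> forall i, e <> edge_a i /\ e <> edge_b i) /\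
  (forall e e', r e <> vzero e -> r e' <> vzero e' -> e = e').

(* A length-n network code on G: local encoding functions.  The encoder of
   e = (u,v) sees the signals on the incoming edges of u, and the message
   (the latter only matters when u = s). *)
Definition encoders : Type :=
  forall e : GE EN k, Msg -> (forall e' : GE EN k, ghead e' = gtail e -> value e') -> value e.

Definition encoder_ok (enc : encoders) : Prop :=
  forall e, gtail e <> node_s -> forall m m' inp, enc e m inp = enc e m' inp.

Definition decoder : Type := (forall i : 'I_k, value (edge_b i)) -> Msg.

(* It is characterized by the local equations: the output of an edge is
   (its encoded input) XOR r_e.  (For an acyclic N this determines sig.) *)
Definition signals_of (enc : encoders) (sig : Msg -> errpat -> errpat) : Prop :=
  forall m r e, sig m r e = vxor (enc e m (fun e' _ => sig m r e')) (r e).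

Definition good (dec : decoder) (sig : Msg -> errpat -> errpat) (m : Msg) : Prop :=
  forall r, admissible r -> dec (fun i => sig m r (edge_b i)) = m.

End Network.

Definition acyclic (VN EN : Type) (tailN headN : EN -> VN) : Prop :=
  exists rk : VN -> nat, forall e, (rk (tailN e) < rk (headN e))%N.

(* Call a good message ambiguous if some tuple other than its error-free
   output on b_1..b_k also decodes to it.  The error-free outputs of the good
   messages and these extra tuples are disjoint, so at most
   2^(kn) - |M_good| <= eps 2^(kn) messages are ambiguous.  An unambiguous
   good message keeps its b_i signal under every admissible error.  For two
   such messages with the same z'_i signal, an error on y_i of the first and
   one on x_i of the second present the same inputs to the message-blind
   encoder of b_i, so their b_i signals agree.  Within each z'_i-fibre the
   unambiguous messages therefore share one b_i value, and the majority rule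
   psi_i can only err on as many messages as the fibre has ambiguous ones. *)

From HB Require Import structures.
From mathcomp Require Import all_boot all_order all_algebra zify lra.
From Stdlib Require Import FunctionalExtensionality.
Import GRing.Theory Num.Theory.
Set Implicit Arguments. Unset Strict Implicit. Unset Printing Implicit Defensive.

Lemma card_fibres (T Z : finType) (f : T -> Z) (A : {set T}) :
  #|A| = (\sum_(z : Z) #|[set x in A | f x == z]|)%N.
Proof.
rewrite -sum1_card (partition_big f xpredT) //=; apply: eq_bigr => z _.
by rewrite -sum1_card; apply: eq_bigl => x; rewrite !inE.
Qed.

Definition ambiguous (T M : finType) (enc : M -> T) (dec : T -> M) (G : {set M}) :=
  [set m in G | [exists t, (dec t == m) && (t != enc m)]].

Lemma unambiguous_decode (T M : finType) (enc : M -> T) (dec : T -> M)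
    (G : {set M}) m t :
  m \in G :\: ambiguous enc dec G -> dec t = m -> t = enc m.
Proof.
rewrite !inE => /andP[+ Gm] dt; apply: contraNeq => tne.
by rewrite Gm; apply/existsP; exists t; rewrite dt eqxx.
Qed.

Lemma card_decodable_add_ambiguous (T M : finType) (enc : M -> T) (dec : T -> M)
    (G : {set M}) :
  {in G, cancel enc dec} -> (#|G| + #|ambiguous enc dec G| <= #|T|)%N.
Proof.
move=> encK.
pose E := [set t | (dec t \in ambiguous enc dec G) && (t != enc (dec t))].
have cardG : #|enc @: G| = #|G|.
  by apply: card_in_imset => m1 m2 G1 G2 e; rewrite -(encK m1) // -(encK m2) // e.
have cardA : (#|ambiguous enc dec G| <= #|E|)%N.
  apply: leq_trans (leq_imset_card dec E); apply/subset_leq_card/subsetP => m Am.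
  have := Am; rewrite inE => /andP[_ /existsP[t /andP[/eqP dt tne]]].
  by apply/imsetP; exists t; rewrite // inE dt Am tne.
have disj : enc @: G :&: E = set0.
  apply/setP => t; rewrite !inE.
  apply/negbTE/andP => -[/imsetP[m Gm ->]]; by rewrite encK // eqxx andbF.
rewrite -cardG; apply: leq_trans (max_card (enc @: G :|: E)).
by rewrite cardsU disj cards0 subn0 leq_add2l.
Qed.

Lemma card_mispredicted_le (M Z B : finType) (G N : {set M})
    (f : M -> Z) (b : M -> B) (psi : Z -> B) :
  (forall z b0, #|[set m in G | (f m == z) && (b m == b0)]|
                <= #|[set m in G | (f m == z) && (b m == psi z)]|)%N ->
  {in G :\: N &, forall m1 m2, f m1 = f m2 -> b m1 = b m2} ->
  (#|[set m in G | psi (f m) != b m]| <= #|N|)%N.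
Proof.
move=> psi_max b_det; rewrite (card_fibres f) (card_fibres f N).
apply: leq_sum => z _.
set Gz := [set m in G | f m == z].
set Bz := [set m in G | (f m == z) && (b m == psi z)].
have -> : [set m in [set m in G | psi (f m) != b m] | f m == z] = Gz :\: Bz.
  apply/setP => m; rewrite !inE; case: (m \in G) => //=.
  by case: (f m =P z) => [->|_]; rewrite ?andbF ?andbT // eq_sym.
have BzGz : Bz \subset Gz by apply/subsetP => m; rewrite !inE => /and3P[-> ->].
have GzN_Bz : (#|Gz :\: N| <= #|Bz|)%N.
  have [->|[m0 Gm0]] := set_0Vmem (Gz :\: N); first by rewrite cards0.
  apply: leq_trans (psi_max z (b m0)); apply/subset_leq_card/subsetP => m1 Gm1.
  move: Gm1 Gm0; rewrite !inE => /and3P[Nm1 Gm1 /eqP fm1] /and3P[Nm0 Gm0 /eqP fm0].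
  have GNm1 : m1 \in G :\: N by rewrite inE Nm1.
  have GNm0 : m0 \in G :\: N by rewrite inE Nm0.
  by rewrite Gm1 fm1 eqxx (b_det _ _ GNm1 GNm0) ?eqxx // fm1 fm0.
have GzNz : (#|Gz :&: N| <= #|[set m in N | f m == z]|)%N.
  by apply/subset_leq_card/subsetP => m; rewrite !inE => /andP[/andP[_ ->] ->].
rewrite cardsD (setIidPr BzGz); have := cardsID N Gz; lia.
Qed.

Definition ekind_eqb (a b : ekind) : bool :=
  match a, b with
  | Ka, Ka | Kx, Kx | Ky, Ky | Kz, Kz | Kz', Kz' | Kb, Kb => true
  | _, _ => false
  end.

Lemma ekind_eqP : Equality.axiom ekind_eqb.
Proof. by do 2 case; constructor. Qed.

HB.instance Definition _ := hasDecEq.Build ekind ekind_eqP.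

Section Network.
Variables (VN EN : Type) (k : nat) (tailN headN : EN -> VN).
Variables (sN tN : 'I_k -> VN) (cN : EN -> nat) (n : nat).
Local Notation gtail := (gtail tailN tN).
Local Notation ghead := (ghead headN sN).
Local Notation vzero := (@vzero EN k cN n).
Local Notation noerr := (@noerr EN k cN n).

Lemma vxorv0 (e : GE EN k) (u : value cN n e) : vxor u (vzero e) = u.
Proof. by apply/ffunP => j; rewrite !ffunE addbF. Qed.

Lemma vxorKv (e : GE EN k) (u v : value cN n e) : vxor u (vxor u v) = v.
Proof. by apply/ffunP => j; rewrite !ffunE addKb. Qed.

(* A topological order of G away from the [B_i], which only feed [t]. *)
Definition node_rank (rk : VN -> nat) (x : GV VN k) : nat :=
  match x with
  | inl v => (rk v).+2
  | inr (inr (inl _)) => 1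
  | _ => 0
  end.

Lemma feeder_tail_neq_B (e e' : GE EN k) j :
  ghead e' = gtail e -> gtail e' <> node_B j.
Proof. by case: e => [?|[[] ?]]; case: e' => [?|[[] ?]]. Qed.

Lemma node_rank_feeder (rk : VN -> nat) (e e' : GE EN k) :
  (forall f, rk (tailN f) < rk (headN f)) ->
  ghead e' = gtail e -> (forall j, gtail e <> node_B j) ->
  node_rank rk (gtail e') < node_rank rk (gtail e).
Proof.
move=> rk_lt; case: e => [e0|[[] j]]; case: e' => [e1|[[] j']] //=.
1-2: by case=> <- _; rewrite ltnS; apply: rk_lt.
all: by move=> _ /(_ j).
Qed.

Definition supported_into_B (r : errpat k cN n) : Prop :=
  forall e, (forall j, ghead e <> node_B j) -> r e = vzero e.

Variable enc : encoders tailN headN sN tN cN n.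
Variable sig : Msg k n -> errpat k cN n -> errpat k cN n.
Hypothesis sigE : signals_of enc sig.
Arguments enc : clear implicits.
Arguments sigE : clear implicits.

(* Errors on edges into the [B_j] are read only by the encoders of the [b_j]. *)
Lemma sig_not_from_B (acyclicN : acyclic tailN headN) m r :
  supported_into_B r -> forall e, (forall j, gtail e <> node_B j) ->
  sig m r e = vxor (sig m noerr e) (r e).
Proof.
move=> r_into_B; case: acyclicN => rk rk_lt.
suff IH : forall N e, node_rank rk (gtail e) = N -> (forall j, gtail e <> node_B j) ->
    sig m r e = vxor (sig m noerr e) (r e) by move=> e; apply: IH.
elim/ltn_ind=> N IH e eN e_not_B.
rewrite [LHS]sigE [sig m noerr e]sigE -[noerr e]/(vzero e) vxorv0; congr vxor; congr (enc e m).
apply: functional_extensionality_dep => e'; apply: functional_extensionality_dep => feeds.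
have lt_e'e : node_rank rk (gtail e') < N.
  by rewrite -eN; apply: node_rank_feeder.
rewrite (IH _ lt_e'e e') //; last by move=> j; apply: feeder_tail_neq_B feeds.
by rewrite r_into_B ?vxorv0 // => j; rewrite feeds.
Qed.

Lemma sig_edge_b (acyclicN : acyclic tailN headN) m r j :
  supported_into_B r ->
  sig m r (edge_b j) = enc (edge_b j) m (fun e' _ => vxor (sig m noerr e') (r e')).
Proof.
move=> r_into_B; rewrite sigE r_into_B // vxorv0; congr (enc _ m).
apply: functional_extensionality_dep => e'; apply: functional_extensionality_dep => feeds.
by apply: sig_not_from_B => // j'; apply: feeder_tail_neq_B feeds.
Qed.

Definition err_at (kd : ekind) (i : 'I_k) (v : {ffun 'I_(n * 1) -> bool}) : errpat k cN n :=
  fun e => match e return value cN n e with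
  | inl e0 => vzero (inl e0)
  | inr (kd', j) => if (kd' == kd) && (j == i) then v else vzero (inr (kd', j))
  end.

Lemma err_at_neq0 kd i v e : err_at kd i v e <> vzero e -> e = inr (kd, i).
Proof. by case: e => [//|[kd' j]] /=; case: andP => // -[/eqP-> /eqP->]. Qed.

Lemma err_at_admissible kd i v :
  kd != Ka -> kd != Kb -> admissible (err_at kd i v).
Proof.
move=> kd_a kd_b; split=> [e /err_at_neq0-> j|e e' /err_at_neq0-> /err_at_neq0-> //].
by split=> -[kd_eq _]; [move: kd_a | move: kd_b]; rewrite kd_eq.
Qed.

Lemma err_at_into_B kd i v :
  ghead (inr (kd, i)) = node_B i -> supported_into_B (err_at kd i v).
Proof.
move=> into_Bi e not_into_B; apply/eqP/contraT => /eqP/err_at_neq0 e_eq.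
by case: (not_into_B i); rewrite e_eq.
Qed.

Definition b_robust m i : Prop :=
  forall r, admissible r -> sig m r (edge_b i) = sig m noerr (edge_b i).

(* Exchange [y_i] (resp. [x_i]) of [m1] (resp. [m2]) by a single error: both
   then present the same inputs to the message-blind encoder of [b_i]. *)
Lemma b_robust_eq (acyclicN : acyclic tailN headN) (enc_ok : encoder_ok enc) m1 m2 i :
  b_robust m1 i -> b_robust m2 i ->
  sig m1 noerr (edge_z' i) = sig m2 noerr (edge_z' i) ->
  sig m1 noerr (edge_b i) = sig m2 noerr (edge_b i).
Proof.
move=> rob1 rob2 z'_eq.
pose r1 := err_at Ky i (vxor (sig m1 noerr (edge_y i)) (sig m2 noerr (edge_y i))).
pose r2 := err_at Kx i (vxor (sig m2 noerr (edge_x i)) (sig m1 noerr (edge_x i))).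
rewrite -(rob1 r1); last exact: err_at_admissible.
rewrite -(rob2 r2); last exact: err_at_admissible.
have r1_into_B : supported_into_B r1 by apply: err_at_into_B.
have r2_into_B : supported_into_B r2 by apply: err_at_into_B.
rewrite !sig_edge_b // (enc_ok _ _ m1 m2) //; congr (enc _ m2).
apply: functional_extensionality_dep => e'; apply: functional_extensionality_dep.
by case: e' => [//|[[] j]] //= [->]; rewrite ?eqxx ?vxorKv ?vxorv0.
Qed.

End Network.

Local Open Scope ring_scope.

Theorem lemma1
  (R : realFieldType)
  (VN EN : Type) (k : nat)
  (tailN headN : EN -> VN) (sN tN : 'I_k -> VN) (cN : EN -> nat) (n : nat)
  (hacyc : acyclic tailN headN)
  (enc : encoders tailN headN sN tN cN n)
  (henc : encoder_ok enc)
  (dec : decoder k cN n)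
  (sig : Msg k n -> errpat k cN n -> errpat k cN n)
  (hsig : signals_of enc sig)
  (Mgood : {set Msg k n})
  (hgood : forall m, m \in Mgood <-> good dec sig m)
  (eps : R) (heps : 0 <= eps)
  (hMgood : (1 - eps) * (2 ^ (k * n))%N%:R <= (#|Mgood|%:R : R))
  (i : 'I_k)
  (psi : {ffun 'I_(n * 1) -> bool} -> {ffun 'I_(n * 1) -> bool})
  (hpsi : forall (zh bh : {ffun 'I_(n * 1) -> bool}),
     (#|[set m in Mgood | (sig m (noerr cN n) (edge_z' i) == zh)
                          && (sig m (noerr cN n) (edge_b i) == bh)]|
     <= #|[set m in Mgood | (sig m (noerr cN n) (edge_z' i) == zh)
                          && (sig m (noerr cN n) (edge_b i) == psi zh)]|)%N) :
  (#|[set m in Mgood | psi (sig m (noerr cN n) (edge_z' i))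
                         != sig m (noerr cN n) (edge_b i)]|%:R : R)
    <= 2 * eps * (2 ^ (k * n))%N%:R.
Proof.
set Bad := [set m in Mgood | _].
pose V1 := {ffun 'I_(n * 1) -> bool}.
pose bvec r m : {ffun 'I_k -> V1} := [ffun j => sig m r (edge_b j)].
pose decT (t : {ffun 'I_k -> V1}) := dec (fun j => t j).
have decT_good m r : m \in Mgood -> admissible r -> decT (bvec r m) = m.
  move=> /hgood m_good r_adm; rewrite -[RHS](m_good r r_adm); congr dec.
  by apply: functional_extensionality_dep => j; rewrite ffunE.
pose NR := ambiguous (bvec (noerr cN n)) decT Mgood.
have robust m : m \in Mgood :\: NR -> b_robust sig m i.
  move=> mGN r r_adm; have Gm : m \in Mgood by move: mGN; rewrite inE => /andP[].
  have := unambiguous_decode mGN (decT_good m r Gm r_adm).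
  by move/(congr1 (fun t : {ffun 'I_k -> V1} => t i)); rewrite !ffunE.
have card_NR : (#|Mgood| + #|NR| <= 2 ^ (k * n))%N.
  have <- : #|{ffun 'I_k -> V1}| = (2 ^ (k * n))%N.
    by rewrite !card_ffun card_bool !card_ord muln1 -expnM mulnC.
  have noerr_adm : admissible (noerr cN n) by split=> e; case.
  by apply: card_decodable_add_ambiguous => m /decT_good; apply.
have card_bad : (#|Bad| <= #|NR|)%N.
  apply: card_mispredicted_le hpsi _ => m1 m2 /robust rob1 /robust rob2.
  exact: b_robust_eq.
have : 0 <= eps * (2 ^ (k * n))%N%:R by rewrite mulr_ge0 ?ler0n.
have : (#|Mgood| + #|NR|)%:R <= (2 ^ (k * n))%N%:R :> R by rewrite ler_nat.
have : #|Bad|%:R <= #|NR|%:R :> R by rewrite ler_nat.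
rewrite natrD; lra.
Qed.
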